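(* (1) The sets $A$, $A+A$ and $A\times A$ are infinite, but none of them is FSM Mostowski infinite and none is FSM Tarski II infinite. (2) None of $\wp_{fin}(A)$, $\wp_{cofin}(A)$, $\wp_{fs}(A)$, $\wp_{fin}(\wp_{fs}(A))$ is FSM Mostowski infinite. (3) None of $A^A_{fs}$, $T_{fin}(A)^A_{fs}$, $\wp_{fs}(A)^A_{fs}$ is FSM Mostowski infinite.
   Context: Framework (FSM). Work in ZF with a fixed infinite set $A$ of atoms; $S_A$ is the group of bijections of $A$ fixing all but finitely many atoms, acting on $A$ by evaluation; $Fix(S)$ is the set of $\pi\in S_A$ fixing each element of $S\subseteq A$; $S$ supports $x$ if $\pi\cdot x=x$ for all $\pi\in Fix(S)$. Products carry the componentwise action; $X+Y=\{(0,x):x\in X\}\cup\{(1,y):y\in Y\}$ with $\pi\cdot(i,z)=(i,\pi\cdot z)$; subsets carry $\pi\star W=\{\pi\cdot w:w\in W\}$. $\wp_{fs}(A)$: finitely supported subsets of $A$; $\wp_{fin}$: finite subsets; $\wp_{cofin}(A)$: cofinite subsets of $A$; $T_{fin}(A)$: finite injective tuples of atoms with componentwise action. For sets $X,Y$, $Y^X_{fs}$ is the set of finitely supported functions $X\to Y$ (functions $f$ for which some finite $S$ gives $f(\pi\cdot x)=\pi\cdot f(x)$ for all $\pi\in Fix(S)$), with action $(\pi\cdot f)(x)=\pi\cdot f(\pi^{-1}\cdot x)$. $X$ is FSM Mostowski infinite if there exist an infinite finitely supported subset $Y\subseteq X$ and a finitely supported total order on $Y$. $X$ is FSM Tarski II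 infinite if there is a nonempty finitely supported family of finitely supported subsets of $X$ that is totally ordered by inclusion and has no maximal element. *)

From Stdlib Require Import List.
Import ListNotations.
Set Implicit Arguments.

Definition atoms_infinite (Atom : Type) : Prop :=
  forall l : list Atom, exists a, ~ In a l.

Record perm (Atom : Type) := Perm {
  pf : Atom -> Atom;
  pinv : Atom -> Atom;
  pinvK : forall a, pinv (pf a) = a;
  pfK : forall a, pf (pinv a) = a;
  pfin : exists l : list Atom, forall a, ~ In a l -> pf a = a }.

Lemma pinv_fin (Atom : Type) (p : perm Atom) :
  exists l : list Atom, forall a, ~ In a l -> pinv p a = a.
Proof.
  destruct (pfin p) as [l Hl]; exists l; intros a Ha.
  rewrite <- (Hl a Ha) at 1. apply pinvK.
Qed.

Definition perm_inv (Atom : Type) (p : perm Atom) : perm Atom :=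
  @Perm Atom (pinv p) (pf p) (pfK p) (pinvK p) (pinv_fin p).

Definition fixes (Atom : Type) (S : list Atom) (p : perm Atom) : Prop :=
  forall a, In a S -> pf p a = a.

Definition supports (Atom U : Type) (act : perm Atom -> U -> U)
  (S : list Atom) (x : U) : Prop :=
  forall p, fixes S p -> act p x = x.

Definition fsupp (Atom U : Type) (act : perm Atom -> U -> U) (x : U) : Prop :=
  exists S : list Atom, supports act S x.

Definition act_atom (Atom : Type) (p : perm Atom) (a : Atom) : Atom := pf p a.

Definition act_prod (Atom U V : Type) (actU : perm Atom -> U -> U)
  (actV : perm Atom -> V -> V) (p : perm Atom) (x : U * V) : U * V :=
  (actU p (fst x), actV p (snd x)).

(* X + Y = {(0,x)} u {(1,y)} modelled by the sum type *)
Definition act_sum (Atom U V : Type) (actU : perm Atom -> U -> U)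
  (actV : perm Atom -> V -> V) (p : perm Atom) (x : U + V) : U + V :=
  match x with inl u => inl (actU p u) | inr v => inr (actV p v) end.

Definition act_pow (Atom U : Type) (act : perm Atom -> U -> U)
  (p : perm Atom) (W : U -> Prop) : U -> Prop :=
  fun y => exists w, W w /\ y = act p w.

Definition act_list (Atom U : Type) (act : perm Atom -> U -> U)
  (p : perm Atom) (l : list U) : list U := map (act p) l.

Definition act_fun (Atom U V : Type) (actU : perm Atom -> U -> U)
  (actV : perm Atom -> V -> V) (p : perm Atom) (f : U -> V) : U -> V :=
  fun x => actV p (f (actU (perm_inv p) x)).

Definition finite_set (U : Type) (X : U -> Prop) : Prop :=
  exists l : list U, forall x, X x -> In x l.

Definition infinite_set (U : Type) (X : U -> Prop) : Prop := ~ finite_set X.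

Definition setT (U : Type) : U -> Prop := fun _ => True.

Definition subset (U : Type) (X Y : U -> Prop) : Prop := forall x, X x -> Y x.

Definition Pfs (Atom : Type) : (Atom -> Prop) -> Prop :=
  fun W => fsupp (act_pow (@act_atom Atom)) W.
Definition Pfin (Atom : Type) : (Atom -> Prop) -> Prop :=
  fun W => finite_set W.
Definition Pcofin (Atom : Type) : (Atom -> Prop) -> Prop :=
  fun W => finite_set (fun a => ~ W a).
Definition Pfin_Pfs (Atom : Type) : ((Atom -> Prop) -> Prop) -> Prop :=
  fun F => finite_set F /\ subset F (@Pfs Atom).
Definition Tfin (Atom : Type) : list Atom -> Prop := fun l => NoDup l.

(* Y^X_fs, for X the whole ambient type U (as is the case for X = A):
   functions f : X -> Y with f(p.x) = p.f(x) for all p in Fix(S), S finite. *)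
Definition FunFS (Atom U V : Type) (actU : perm Atom -> U -> U)
  (actV : perm Atom -> V -> V) (Y : V -> Prop) : (U -> V) -> Prop :=
  fun f => (forall x, Y (f x)) /\
    exists S : list Atom, forall p, fixes S p ->
      forall x, f (actU p x) = actV p (f x).

Definition total_order_on (U : Type) (Y : U -> Prop) (R : U * U -> Prop) : Prop :=
  (forall x y, R (x, y) -> Y x /\ Y y) /\
  (forall x, Y x -> R (x, x)) /\
  (forall x y, Y x -> Y y -> R (x, y) -> R (y, x) -> x = y) /\
  (forall x y z, Y x -> Y y -> Y z -> R (x, y) -> R (y, z) -> R (x, z)) /\
  (forall x y, Y x -> Y y -> R (x, y) \/ R (y, x)).

Definition FSM_Mostowski_infinite (Atom U : Type) (act : perm Atom -> U -> U)
  (X : U -> Prop) : Prop :=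
  exists (Y : U -> Prop) (R : U * U -> Prop),
    subset Y X /\ infinite_set Y /\ fsupp (act_pow act) Y /\
    fsupp (act_pow (act_prod act act)) R /\ total_order_on Y R.

Definition FSM_TarskiII_infinite (Atom U : Type) (act : perm Atom -> U -> U)
  (X : U -> Prop) : Prop :=
  exists F : (U -> Prop) -> Prop,
    (exists Z, F Z) /\
    fsupp (act_pow (act_pow act)) F /\
    (forall Z, F Z -> subset Z X /\ fsupp (act_pow act) Z) /\
    (forall Z1 Z2, F Z1 -> F Z2 -> subset Z1 Z2 \/ subset Z2 Z1) /\
    (forall Z, F Z -> exists Z', F Z' /\ subset Z Z' /\ ~ subset Z' Z).

From Stdlib Require Import List.
From Stdlib Require Import Classical ClassicalEpsilon FunctionalExtensionality PropExtensionality.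
Import ListNotations.

(* Every non-infiniteness claim is reduced to one finiteness property of an
   action: for every finite set S of atoms, only finitely many elements of X
   are fixed by all transpositions (a b) of atoms outside S ("few S-invariant
   elements").  Indeed, if Y and a total order R on Y are both supported by S,
   then every y in Y is fixed by such a transposition: y and (a b).y are
   comparable, and applying the involution (a b) reverses the comparison, so
   antisymmetry gives (a b).y = y.  Hence an infinite such Y cannot exist
   (Mostowski), and a chain of supported subsets consists of S-invariant sets,
   so it is finite and has a largest member (Tarski II).
   The finiteness property is then checked case by case: it holds for actions
   with finitely many "swap orbits" (atoms, A + A, A x A), for their invariant
   subsets (in particular for any family of subsets of A), for finite families
   of finitely supported subsets of A (whose members are then S-invariant),
   and it passes from a codomain V to the finitely supported functions A -> V,
   since an invariant function is determined by its values on a finite set of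
   atoms, each of which is again invariant. *)

Lemma not_in_app {T : Type} (x : T) (l1 l2 : list T) :
  ~ In x (l1 ++ l2) -> ~ In x l1 /\ ~ In x l2.
Proof. intros H; split; intro; apply H; apply in_or_app; auto. Qed.

Ltac split_not_in :=
  repeat match goal with
  | H : ~ In _ (_ :: _) |- _ => apply not_in_cons in H as [? H]
  | H : ~ In _ (_ ++ _) |- _ => apply not_in_app in H as [? H]
  end.

Fixpoint tuples {V : Type} (vals : list V) (n : nat) : list (list V) :=
  match n with
  | 0 => [[]]
  | S m => flat_map (fun v => map (cons v) (tuples vals m)) vals
  end.

Lemma tuples_complete {V : Type} (vals c : list V) :
  incl c vals -> In c (tuples vals (length c)).
Proof.
  induction c as [|v c IH]; intros Hc; simpl; auto.
  apply in_flat_map. exists v. split; [apply Hc; simpl; auto|].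
  apply in_map, IH. intros x Hx; apply Hc; simpl; auto.
Qed.

Lemma finite_by_restriction {U V : Type} (P : (U -> V) -> Prop)
    (reps : list U) (vals : list V) :
  (forall f, P f -> forall r, In r reps -> In (f r) vals) ->
  (forall f g, P f -> P g -> (forall r, In r reps -> f r = g r) -> f = g) ->
  exists l, forall f, P f -> In f l.
Proof.
  intros Hvals Hdet.
  destruct (classic (exists f, P f)) as [[f0 Hf0]|Hnone].
  2: { exists []. intros f Hf. exfalso; eauto. }
  set (pick := fun c => epsilon (inhabits f0) (fun g => P g /\ map g reps = c)).
  exists (map pick (tuples vals (length reps))). intros f Hf.
  apply in_map_iff. exists (map f reps). split.
  - destruct (epsilon_spec (inhabits f0) (fun g => P g /\ map g reps = map f reps))
      as [Hg Hmap]; [exists f; auto|].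
    apply Hdet; auto. exact (ext_in_map Hmap).
  - rewrite <- (length_map f reps). apply tuples_complete.
    intros v Hv. apply in_map_iff in Hv as [r [<- Hr]]. apply Hvals; auto.
Qed.

Lemma prop_in_bool_list (P : Prop) : In P [True; False].
Proof.
  destruct (classic P) as [H|H]; simpl.
  - left. apply propositional_extensionality; tauto.
  - right; left. apply propositional_extensionality; tauto.
Qed.

Lemma subset_antisym {U : Type} (Z1 Z2 : U -> Prop) :
  subset Z1 Z2 -> subset Z2 Z1 -> Z1 = Z2.
Proof.
  intros H12 H21. apply functional_extensionality; intro x.
  apply propositional_extensionality; split; auto.
Qed.

Lemma chain_has_maximum {U : Type} (l : list (U -> Prop)) :
  forall F : (U -> Prop) -> Prop,
  (exists Z, F Z) -> (forall Z, F Z -> In Z l) ->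
  (forall Z1 Z2, F Z1 -> F Z2 -> subset Z1 Z2 \/ subset Z2 Z1) ->
  exists M, F M /\ forall Z, F Z -> subset Z M.
Proof.
  induction l as [|h t IH]; intros F [Z0 HZ0] Hin Hch.
  { destruct (Hin _ HZ0). }
  destruct (classic (exists Z, F Z /\ Z <> h)) as [Hrest|Honly].
  - (* the chain without h has a maximum M; compare it with h *)
    destruct (IH (fun Z => F Z /\ Z <> h)) as [M [[HM _] HMmax]]; auto.
    { intros Z [HZ Hneq]. destruct (Hin _ HZ); [congruence|auto]. }
    { intros Z1 Z2 [H1 _] [H2 _]; auto. }
    assert (Hbelow : forall Z, F Z -> Z <> h -> subset Z M)
      by (intros Z HZ Hneq; apply HMmax; auto).
    destruct (classic (F h)) as [Fh|nFh].
    + destruct (Hch _ _ Fh HM) as [Hhm|Hmh].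
      * exists M. split; auto. intros Z HZ.
        destruct (classic (Z = h)) as [->|]; auto.
      * exists h. split; auto. intros Z HZ x Hx.
        destruct (classic (Z = h)) as [->|]; auto. apply Hmh, (Hbelow Z); auto.
    + exists M. split; auto. intros Z HZ. apply Hbelow; congruence.
  -
    assert (Honly' : forall Z, F Z -> Z = h)
      by (intros Z HZ; apply NNPP; intro; apply Honly; eauto).
    exists h. rewrite <- (Honly' Z0 HZ0). split; auto.
    intros Z HZ. rewrite (Honly' Z HZ), <- (Honly' Z0 HZ0). intros x; auto.
Qed.

(* An element of a set totally ordered by an antisymmetric relation is fixed
   by every involution preserving both the set and the relation: y and s y are
   comparable, and applying s reverses the comparison. *)
Lemma involution_fixes_ordered {U : Type} (s : U -> U) (Y : U -> Prop)
    (R : U -> U -> Prop) :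
  (forall x, s (s x) = x) ->
  (forall y, Y y -> Y (s y)) ->
  (forall u v, R u v -> R (s u) (s v)) ->
  (forall u v, Y u -> Y v -> R u v -> R v u -> u = v) ->
  (forall u v, Y u -> Y v -> R u v \/ R v u) ->
  forall y, Y y -> s y = y.
Proof.
  intros Hs HY HR Hanti Htot y Hy.
  destruct (Htot y (s y) Hy (HY y Hy)) as [H|H];
    pose proof (HR _ _ H) as H'; rewrite Hs in H'; apply Hanti; auto.
Qed.

Section Transpositions.
Context {Atom : Type}.

(* Atoms carry no structure, so equality of atoms is decided classically. *)
Definition eq_atom_dec (a b : Atom) : {a = b} + {a <> b} :=
  excluded_middle_informative (a = b).

Definition swap (a b x : Atom) : Atom :=
  if eq_atom_dec x a then b else if eq_atom_dec x b then a else x.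

Lemma swap_involutive (a b x : Atom) : swap a b (swap a b x) = x.
Proof.
  unfold swap. destruct (eq_atom_dec x a); destruct (eq_atom_dec x b); subst;
  repeat (destruct (eq_atom_dec _ _)); subst; congruence.
Qed.

Lemma swap_l (a b : Atom) : swap a b a = b.
Proof. unfold swap. destruct (eq_atom_dec a a); congruence. Qed.

Lemma swap_r (a b : Atom) : swap a b b = a.
Proof. unfold swap. destruct (eq_atom_dec b a); destruct (eq_atom_dec b b); congruence. Qed.

Lemma swap_other (a b x : Atom) : x <> a -> x <> b -> swap a b x = x.
Proof. intros. unfold swap. destruct (eq_atom_dec x a); destruct (eq_atom_dec x b); congruence. Qed.

Lemma swap_finite (a b : Atom) :
  exists l : list Atom, forall x, ~ In x l -> swap a b x = x.
Proof. exists [a; b]. intros x Hx. split_not_in. apply swap_other; auto. Qed.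

Definition transp (a b : Atom) : perm Atom :=
  @Perm Atom (swap a b) (swap a b) (swap_involutive a b) (swap_involutive a b)
    (swap_finite a b).

Lemma transp_fixes (S : list Atom) (a b : Atom) :
  ~ In a S -> ~ In b S -> fixes S (transp a b).
Proof. intros Ha Hb x Hx. apply swap_other; intro; subst; auto. Qed.

Definition swap_involutive_action {U : Type} (act : perm Atom -> U -> U) : Prop :=
  forall a b x, act (transp a b) (act (transp a b) x) = x.

Definition swap_invariant {U : Type} (act : perm Atom -> U -> U)
    (S : list Atom) (x : U) : Prop :=
  forall a b, ~ In a S -> ~ In b S -> act (transp a b) x = x.

Definition few_invariants {U : Type} (act : perm Atom -> U -> U)
    (X : U -> Prop) : Prop :=
  forall S, exists l, forall x, X x -> swap_invariant act S x -> In x l.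

Lemma act_pow_transp {U : Type} (act : perm Atom -> U -> U) a b W y :
  swap_involutive_action act ->
  act_pow act (transp a b) W y <-> W (act (transp a b) y).
Proof.
  intros Hinv. split.
  - intros [w [Hw ->]]. rewrite Hinv. auto.
  - intros Hy. exists (act (transp a b) y). rewrite Hinv. auto.
Qed.

Lemma pow_swap_invariant_iff {U : Type} (act : perm Atom -> U -> U) S Z :
  swap_involutive_action act ->
  swap_invariant (act_pow act) S Z <->
  forall a b, ~ In a S -> ~ In b S -> forall x, Z (act (transp a b) x) <-> Z x.
Proof.
  intros Hinv. split.
  - intros H a b Ha Hb x. rewrite <- (act_pow_transp act a b Z x Hinv), (H a b Ha Hb). tauto.
  - intros H a b Ha Hb. apply functional_extensionality; intro x.
    apply propositional_extensionality. rewrite act_pow_transp by auto. auto.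
Qed.

Lemma act_pow_subset {U : Type} (act : perm Atom -> U -> U) p Z1 Z2 :
  subset Z1 Z2 -> subset (act_pow act p Z1) (act_pow act p Z2).
Proof. intros H y [w [Hw ->]]. exists w; auto. Qed.

Lemma swap_involutive_atom : swap_involutive_action (@act_atom Atom).
Proof. intros a b x. apply swap_involutive. Qed.

Lemma swap_involutive_sum {U V : Type} (actU : perm Atom -> U -> U)
    (actV : perm Atom -> V -> V) :
  swap_involutive_action actU -> swap_involutive_action actV ->
  swap_involutive_action (act_sum actU actV).
Proof. intros HU HV a b [x|x]; simpl; congruence. Qed.

Lemma swap_involutive_prod {U V : Type} (actU : perm Atom -> U -> U)
    (actV : perm Atom -> V -> V) :
  swap_involutive_action actU -> swap_involutive_action actV ->
  swap_involutive_action (act_prod actU actV).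
Proof. intros HU HV a b [x y]; unfold act_prod; simpl; congruence. Qed.

Lemma swap_involutive_list {U : Type} (act : perm Atom -> U -> U) :
  swap_involutive_action act -> swap_involutive_action (act_list act).
Proof.
  intros H a b l. unfold act_list. rewrite map_map.
  induction l; simpl; congruence.
Qed.

Lemma swap_involutive_pow {U : Type} (act : perm Atom -> U -> U) :
  swap_involutive_action act -> swap_involutive_action (act_pow act).
Proof.
  intros H a b W. apply functional_extensionality; intro y.
  apply propositional_extensionality.
  rewrite !act_pow_transp by auto. rewrite H. tauto.
Qed.

Lemma swap_involutive_fun {V : Type} (actV : perm Atom -> V -> V) :
  swap_involutive_action actV -> swap_involutive_action (act_fun (@act_atom Atom) actV).
Proof.
  intros H a b f. apply functional_extensionality; intro x.
  unfold act_fun, act_atom. simpl. rewrite swap_involutive. apply H.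
Qed.

End Transpositions.

Section Criteria.
Context {Atom U : Type} (act : perm Atom -> U -> U).
Hypothesis act_involutive : swap_involutive_action act.

(* Mostowski: an infinite supported subset with a supported total order would
   consist of invariant elements, of which there are finitely many. *)
Theorem not_mostowski_of_few_invariants (X : U -> Prop) :
  few_invariants act X -> ~ FSM_Mostowski_infinite act X.
Proof.
  intros Hfew [Y [R [HYX [HYinf [[S1 HS1] [[S2 HS2] HR]]]]]].
  destruct HR as [_ [_ [Hanti [_ Htot]]]].
  destruct (Hfew (S1 ++ S2)) as [l Hl].
  apply HYinf. exists l. intros y Hy. apply Hl; [auto|].
  intros a b Ha Hb. split_not_in.
  assert (HY : act_pow act (transp a b) Y = Y) by (apply HS1, transp_fixes; auto).
  assert (HRinv : act_pow (act_prod act act) (transp a b) R = R)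
    by (apply HS2, transp_fixes; auto).
  apply (involution_fixes_ordered (act (transp a b)) Y (fun u v => R (u, v))); auto.
  - intros z Hz. rewrite <- HY. exists z; auto.
  - intros u v Huv. rewrite <- HRinv. exists (u, v); auto.
Qed.

(* Tarski II: the members of a supported chain of subsets are invariant, so the
   chain is finite and has a largest member. *)
Theorem not_tarski_of_few_invariant_subsets (X : U -> Prop) :
  few_invariants (act_pow act) (fun Z => subset Z X) -> ~ FSM_TarskiII_infinite act X.
Proof.
  intros Hfew [F [Hne [[S HS] [Hsub [Hch Hnomax]]]]].
  destruct (Hfew S) as [l Hl].
  assert (Hmembers : forall Z, F Z -> In Z l).
  { intros Z HZ. apply Hl; [exact (proj1 (Hsub Z HZ))|]. intros a b Ha Hb.
    assert (HF : act_pow (act_pow act) (transp a b) F = F)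
      by (apply HS, transp_fixes; auto).
    apply (involution_fixes_ordered (act_pow act (transp a b)) F (@subset U)); auto.
    - apply swap_involutive_pow; auto.
    - intros W HW. rewrite <- HF. exists W; auto.
    - intros u v. apply act_pow_subset.
    - intros u v _ _. apply subset_antisym. }
  destruct (chain_has_maximum l F Hne Hmembers Hch) as [M [HM HMmax]].
  destruct (Hnomax M HM) as [Z [HZ [_ Hstrict]]]. apply Hstrict, HMmax; auto.
Qed.

End Criteria.

Section SwapOrbits.
Context {Atom U : Type} (act : perm Atom -> U -> U).

Inductive swap_reach (S : list Atom) (x : U) : U -> Prop :=
  | reach_refl : swap_reach S x x
  | reach_step a b y : ~ In a S -> ~ In b S ->
      swap_reach S x y -> swap_reach S x (act (transp a b) y).

Definition swap_orbit_finite : Prop :=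
  forall S, exists K : list U, forall x, exists y, In y K /\ swap_reach S x y.

Lemma swap_reach_invariant S x y :
  swap_invariant act S x -> swap_reach S x y -> y = x.
Proof.
  intros Hx Hr. induction Hr as [|a b y Ha Hb _ IH]; auto.
  rewrite IH. apply Hx; auto.
Qed.

Lemma swap_reach_invariant_pred S (Z : U -> Prop) x y :
  (forall a b, ~ In a S -> ~ In b S -> forall u, Z (act (transp a b) u) <-> Z u) ->
  swap_reach S x y -> (Z x <-> Z y).
Proof.
  intros HZ Hr. induction Hr as [|a b y Ha Hb _ IH]; [tauto|].
  rewrite (HZ a b Ha Hb). exact IH.
Qed.

(* An invariant element is its own orbit, hence among the representatives. *)
Lemma orbit_finite_few_invariants (X : U -> Prop) :
  swap_orbit_finite -> few_invariants act X.
Proof.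
  intros Horb S. destruct (Horb S) as [K HK]. exists K. intros x _ Hx.
  destruct (HK x) as [y [Hy Hr]]. rewrite <- (swap_reach_invariant S x y Hx Hr). auto.
Qed.

(* An invariant subset is determined by which representatives it contains. *)
Lemma orbit_finite_few_invariant_sets (Q : (U -> Prop) -> Prop) :
  swap_involutive_action act -> swap_orbit_finite -> few_invariants (act_pow act) Q.
Proof.
  intros Hinv Horb S. destruct (Horb S) as [K HK].
  destruct (finite_by_restriction (swap_invariant (act_pow act) S) K [True; False])
    as [l Hl].
  - intros; apply prop_in_bool_list.
  - intros Z1 Z2 H1 H2 Hagree.
    rewrite pow_swap_invariant_iff in H1, H2 by auto.
    apply functional_extensionality; intro x. destruct (HK x) as [y [Hy Hr]].
    apply propositional_extensionality.
    rewrite (swap_reach_invariant_pred S Z1 x y), (swap_reach_invariant_pred S Z2 x y),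
      (Hagree y); auto; tauto.
  - exists l. auto.
Qed.

End SwapOrbits.

Section Instances.
Context {Atom : Type} (Hinf : atoms_infinite Atom).

(* Outside S, every atom can be moved to one fixed fresh atom e. *)
Lemma atom_orbit_finite : swap_orbit_finite (@act_atom Atom).
Proof.
  intros S. destruct (Hinf S) as [e He]. exists (e :: S). intros x.
  destruct (classic (In x (e :: S))) as [Hx|Hx].
  - exists x. split; auto. constructor.
  - exists e. split; [simpl; auto|]. apply not_in_cons in Hx as [_ HxS].
    rewrite <- (swap_l x e). exact (reach_step _ _ _ _ _ _ HxS He (reach_refl _ _ _)).
Qed.

Lemma swap_reach_inl {U V : Type} (actU : perm Atom -> U -> U)
    (actV : perm Atom -> V -> V) S x y :
  swap_reach actU S x y -> swap_reach (act_sum actU actV) S (inl x) (inl y).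
Proof.
  intros Hr. induction Hr; [constructor|].
  exact (reach_step (act_sum actU actV) S (inl x) a b (inl y) H H0 IHHr).
Qed.

Lemma swap_reach_inr {U V : Type} (actU : perm Atom -> U -> U)
    (actV : perm Atom -> V -> V) S x y :
  swap_reach actV S x y -> swap_reach (act_sum actU actV) S (inr x) (inr y).
Proof.
  intros Hr. induction Hr; [constructor|].
  exact (reach_step (act_sum actU actV) S (inr x) a b (inr y) H H0 IHHr).
Qed.

Lemma sum_orbit_finite {U V : Type} (actU : perm Atom -> U -> U)
    (actV : perm Atom -> V -> V) :
  swap_orbit_finite actU -> swap_orbit_finite actV ->
  swap_orbit_finite (act_sum actU actV).
Proof.
  intros HU HV S. destruct (HU S) as [KU HKU], (HV S) as [KV HKV].
  exists (map inl KU ++ map inr KV). intros [x|x].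
  - destruct (HKU x) as [y [Hy Hr]]. exists (inl y).
    split; [apply in_or_app; left; apply in_map; auto|apply swap_reach_inl; auto].
  - destruct (HKV x) as [y [Hy Hr]]. exists (inr y).
    split; [apply in_or_app; right; apply in_map; auto|apply swap_reach_inr; auto].
Qed.

Lemma act_pair_transp (a b x y : Atom) :
  act_prod (@act_atom Atom) (@act_atom Atom) (transp a b) (x, y) = (swap a b x, swap a b y).
Proof. reflexivity. Qed.

(* With two fresh atoms e, e', a pair is moved first to (e, _), then its
   second component into e :: e' :: S, using a fresh atom distinct from the
   (now fixed) first component. *)
Lemma atom_pair_orbit_finite :
  swap_orbit_finite (act_prod (@act_atom Atom) (@act_atom Atom)).
Proof.
  intros S. destruct (Hinf S) as [e He]. destruct (Hinf (e :: S)) as [e' He'].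
  apply not_in_cons in He' as [He'e He']. set (K := e :: e' :: S).
  assert (Hsecond : forall z x y, In x K ->
    swap_reach (act_prod (@act_atom Atom) (@act_atom Atom)) S z (x, y) ->
    exists y', In y' K /\ swap_reach (act_prod (@act_atom Atom) (@act_atom Atom)) S z (x, y')).
  { intros z x y Hx Hr. destruct (classic (In y K)) as [Hy|Hy]; [eauto|].
    set (c := if eq_atom_dec x e then e' else e).
    assert (Hc : In c K /\ c <> x /\ ~ In c S)
      by (unfold c; destruct (eq_atom_dec x e) as [->|]; unfold K; simpl; auto).
    destruct Hc as [HcK [Hcx HcS]].
    assert (HyS : ~ In y S) by (intro; apply Hy; unfold K; simpl; auto).
    assert (Hxy : x <> y) by (intro; subst; auto).
    exists c. split; auto.
    pose proof (reach_step _ _ _ y c _ HyS HcS Hr) as Hr'.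
    rewrite act_pair_transp, swap_l, swap_other in Hr'; auto. }
  exists (list_prod K K). intros [x y].
  assert (Hfirst : exists x' y1, In x' K /\
    swap_reach (act_prod (@act_atom Atom) (@act_atom Atom)) S (x, y) (x', y1)).
  { destruct (classic (In x K)) as [Hx|Hx].
    - exists x, y. split; auto. constructor.
    - assert (HxS : ~ In x S) by (intro; apply Hx; unfold K; simpl; auto).
      exists e, (swap x e y). split; [unfold K; simpl; auto|].
      pose proof (reach_step (act_prod (@act_atom Atom) (@act_atom Atom)) S (x, y)
                    x e (x, y) HxS He (reach_refl _ _ _)) as Hr.
      rewrite act_pair_transp, swap_l in Hr. exact Hr. }
  destruct Hfirst as [x' [y1 [Hx' Hr]]].
  destruct (Hsecond _ _ _ Hx' Hr) as [y' [Hy' Hr']].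
  exists (x', y'). split; auto. apply in_prod; auto.
Qed.

(* An invariant injective tuple has all its entries in S (an entry y outside S
   would be moved to a fresh atom by (y c)), hence is a repetition-free list
   over S. *)
Lemma injective_tuples_few_invariants :
  few_invariants (act_list (@act_atom Atom)) (@Tfin Atom).
Proof.
  intros S. exists (flat_map (tuples S) (seq 0 (Datatypes.S (length S)))).
  intros t Hnodup Ht.
  assert (Hentries : incl t S).
  { intros y Hy. apply NNPP; intro HyS.
    destruct (Hinf (S ++ t)) as [c Hc]. apply not_in_app in Hc as [HcS Hct].
    apply Hct. rewrite <- (Ht y c HyS HcS). apply in_map_iff.
    exists y. split; auto. apply swap_l. }
  apply in_flat_map. exists (length t). split.
  - apply in_seq. split; [apply le_0_n|].
    apply PeanoNat.Nat.lt_succ_r, NoDup_incl_length; auto.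
  - apply tuples_complete; auto.
Qed.

Lemma fun_swap_invariant_at {V : Type} (actV : perm Atom -> V -> V) S f a b :
  swap_invariant (act_fun (@act_atom Atom) actV) S f -> ~ In a S -> ~ In b S ->
  forall x, actV (transp a b) (f (swap a b x)) = f x.
Proof. intros Hf Ha Hb x. exact (f_equal (fun g => g x) (Hf a b Ha Hb)). Qed.

(* An S-invariant function A -> V is determined by its values on e :: S for a
   fresh e (elsewhere f x = (x e).f(e)), and each such value f r is
   (e :: S)-invariant in V. *)
Lemma fs_functions_few_invariants {V : Type} (actV : perm Atom -> V -> V)
    (Y : V -> Prop) :
  few_invariants actV Y ->
  few_invariants (act_fun (@act_atom Atom) actV) (FunFS (@act_atom Atom) actV Y).
Proof.
  intros Hfew S. destruct (Hinf S) as [e He]. destruct (Hfew (e :: S)) as [vals Hvals].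
  destruct (finite_by_restriction
              (fun f => FunFS (@act_atom Atom) actV Y f /\
                        swap_invariant (act_fun (@act_atom Atom) actV) S f)
              (e :: S) vals) as [l Hl].
  - intros f [[HY _] Hf] r Hr. apply Hvals; auto. intros a b Ha Hb.
    assert (Hra : r <> a) by (intro; subst; auto).
    assert (Hrb : r <> b) by (intro; subst; auto).
    apply not_in_cons in Ha as [_ HaS]. apply not_in_cons in Hb as [_ HbS].
    rewrite <- (fun_swap_invariant_at actV S f a b Hf HaS HbS r) at 2.
    rewrite swap_other; auto.
  - intros f g [_ Hf] [_ Hg] Hagree. apply functional_extensionality; intro x.
    destruct (classic (In x (e :: S))) as [Hx|Hx]; auto.
    apply not_in_cons in Hx as [_ HxS].
    rewrite <- (fun_swap_invariant_at actV S f x e Hf HxS He x),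
      <- (fun_swap_invariant_at actV S g x e Hg HxS He x), swap_l, Hagree;
      simpl; auto.
  - exists l. intros f Hf Hinv. apply Hl; auto.
Qed.

Lemma supports_mono {U : Type} (act : perm Atom -> U -> U) S S' (x : U) :
  supports act S x -> incl S S' -> supports act S' x.
Proof. intros H Hincl p Hp. apply H. intros a Ha. apply Hp, Hincl; auto. Qed.

Lemma common_support {U : Type} (act : perm Atom -> U -> U) (G : U -> Prop) :
  finite_set G -> (forall x, G x -> fsupp act x) ->
  exists T, forall x, G x -> supports act T x.
Proof.
  intros [lg Hlg] Hfs.
  assert (Hlist : forall l, exists T, forall x, In x l -> G x -> supports act T x).
  { induction l as [|h t [T HT]]; [exists []; intros x []|].
    destruct (classic (G h)) as [Gh|nGh].
    - destruct (Hfs h Gh) as [Th HTh]. exists (Th ++ T).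
      intros x [<-|Hx] Gx; eapply supports_mono; eauto; intros y Hy; apply in_or_app; auto.
    - exists T. intros x [<-|Hx] Gx; [contradiction|auto]. }
  destruct (Hlist lg) as [T HT]. exists T. auto.
Qed.

Lemma supported_set_swap T (W : Atom -> Prop) u v :
  supports (act_pow (@act_atom Atom)) T W -> ~ In u T -> ~ In v T -> (W u <-> W v).
Proof.
  intros HW Hu Hv.
  pose proof (act_pow_transp (@act_atom Atom) u v W u swap_involutive_atom) as K.
  rewrite (HW _ (transp_fixes T u v Hu Hv)) in K. unfold act_atom in K; simpl in K.
  rewrite swap_l in K. exact K.
Qed.

(* For a outside S and fresh c, d, e: the member
   (a c).Z contains c iff Z contains a, and d iff Z contains d; as c, d are
   outside T this gives Z a <-> Z d <-> Z e.  So Z is constant outside S. *)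
Lemma invariant_family_members (S T : list Atom) (G : (Atom -> Prop) -> Prop) :
  (forall Z, G Z -> supports (act_pow (@act_atom Atom)) T Z) ->
  swap_invariant (act_pow (act_pow (@act_atom Atom))) S G ->
  forall Z, G Z -> swap_invariant (act_pow (@act_atom Atom)) S Z.
Proof.
  intros HT HG Z HZ.
  assert (Hmove : forall a b, ~ In a S -> ~ In b S -> G (act_pow (@act_atom Atom) (transp a b) Z)).
  { intros a b Ha Hb. rewrite <- (HG a b Ha Hb).
    apply act_pow_transp; [apply swap_involutive_pow, swap_involutive_atom|].
    rewrite swap_involutive_pow by apply swap_involutive_atom. exact HZ. }
  destruct (Hinf (S ++ T)) as [e He]. apply not_in_app in He as [HeS HeT].
  assert (Hconst : forall a, ~ In a S -> (Z a <-> Z e)).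
  { intros a Ha.
    destruct (Hinf (a :: S ++ T)) as [c Hc].
    apply not_in_cons in Hc as [Hca Hc]. apply not_in_app in Hc as [HcS HcT].
    destruct (Hinf (a :: c :: T)) as [d Hd].
    apply not_in_cons in Hd as [Hda Hd]. apply not_in_cons in Hd as [Hdc HdT].
    set (Z' := act_pow (@act_atom Atom) (transp a c) Z).
    assert (Hc' : Z' c <-> Z a).
    { unfold Z'. rewrite act_pow_transp by apply swap_involutive_atom.
      unfold act_atom; simpl. rewrite swap_r. tauto. }
    assert (Hd' : Z' d <-> Z d).
    { unfold Z'. rewrite act_pow_transp by apply swap_involutive_atom.
      unfold act_atom; simpl. rewrite swap_other by auto. tauto. }
    pose proof (supported_set_swap T Z' c d (HT Z' (Hmove a c Ha HcS)) HcT HdT).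
    pose proof (supported_set_swap T Z d e (HT Z HZ) HdT HeT).
    tauto. }
  apply pow_swap_invariant_iff; [apply swap_involutive_atom|].
  intros a b Ha Hb x. unfold act_atom; simpl.
  destruct (eq_atom_dec x a) as [->|Hxa].
  { rewrite swap_l, (Hconst a), (Hconst b); tauto. }
  destruct (eq_atom_dec x b) as [->|Hxb].
  { rewrite swap_r, (Hconst a), (Hconst b); tauto. }
  rewrite swap_other; tauto.
Qed.

(* An S-invariant finite family of finitely supported subsets of A consists of
   S-invariant sets, which are finitely many; so there are finitely many such
   families. *)
Lemma finite_families_few_invariants :
  few_invariants (act_pow (act_pow (@act_atom Atom))) (@Pfin_Pfs Atom).
Proof.
  intros S.
  destruct (orbit_finite_few_invariant_sets (@act_atom Atom) (@setT (Atom -> Prop))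
              swap_involutive_atom atom_orbit_finite S) as [L HL].
  destruct (finite_by_restriction (fun G : (Atom -> Prop) -> Prop => forall Z, G Z -> In Z L)
              L [True; False]) as [l Hl].
  - intros; apply prop_in_bool_list.
  - intros G1 G2 H1 H2 Hagree. apply functional_extensionality; intro Z.
    apply propositional_extensionality.
    destruct (classic (In Z L)) as [HZ|HZ].
    + rewrite (Hagree Z HZ). tauto.
    + split; intro K; exfalso; apply HZ; auto.
  - exists l. intros G [Gfin Gfs] HG. apply Hl. intros Z HZ.
    destruct (common_support (act_pow (@act_atom Atom)) G Gfin Gfs) as [T HT].
    apply HL; [exact I|]. exact (invariant_family_members S T G HT HG Z HZ).
Qed.

End Instances.

Lemma infinite_of_retraction {Atom U : Type} (Hinf : atoms_infinite Atom)
    (f : Atom -> U) (g : U -> Atom) :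
  (forall a, g (f a) = a) -> infinite_set (@setT U).
Proof.
  intros Hgf [l Hl]. destruct (Hinf (map g l)) as [a Ha]. apply Ha.
  rewrite <- (Hgf a). apply in_map, Hl. exact I.
Qed.

Corollary orbit_finite_not_mostowski {Atom U : Type} (act : perm Atom -> U -> U)
    (X : U -> Prop) :
  swap_involutive_action act -> swap_orbit_finite act -> ~ FSM_Mostowski_infinite act X.
Proof.
  intros Hinv Horb. apply not_mostowski_of_few_invariants, orbit_finite_few_invariants; auto.
Qed.

Corollary orbit_finite_not_tarski {Atom U : Type} (act : perm Atom -> U -> U)
    (X : U -> Prop) :
  swap_involutive_action act -> swap_orbit_finite act -> ~ FSM_TarskiII_infinite act X.
Proof.
  intros Hinv Horb. apply not_tarski_of_few_invariant_subsets, orbit_finite_few_invariant_sets; auto.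
Qed.

Theorem mainTheorem17 (Atom : Type) (Hinf : atoms_infinite Atom) :
  (* (1) *)
  (infinite_set (@setT Atom) /\
   infinite_set (@setT (Atom + Atom)) /\
   infinite_set (@setT (Atom * Atom)) /\
   ~ FSM_Mostowski_infinite (@act_atom Atom) (@setT Atom) /\
   ~ FSM_Mostowski_infinite (act_sum (@act_atom Atom) (@act_atom Atom)) (@setT (Atom + Atom)) /\
   ~ FSM_Mostowski_infinite (act_prod (@act_atom Atom) (@act_atom Atom)) (@setT (Atom * Atom)) /\
   ~ FSM_TarskiII_infinite (@act_atom Atom) (@setT Atom) /\
   ~ FSM_TarskiII_infinite (act_sum (@act_atom Atom) (@act_atom Atom)) (@setT (Atom + Atom)) /\
   ~ FSM_TarskiII_infinite (act_prod (@act_atom Atom) (@act_atom Atom)) (@setT (Atom * Atom))) /\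
  (* (2) *)
  (~ FSM_Mostowski_infinite (act_pow (@act_atom Atom)) (@Pfin Atom) /\
   ~ FSM_Mostowski_infinite (act_pow (@act_atom Atom)) (@Pcofin Atom) /\
   ~ FSM_Mostowski_infinite (act_pow (@act_atom Atom)) (@Pfs Atom) /\
   ~ FSM_Mostowski_infinite (act_pow (act_pow (@act_atom Atom))) (@Pfin_Pfs Atom)) /\
  (* (3) *)
  (~ FSM_Mostowski_infinite (act_fun (@act_atom Atom) (@act_atom Atom))
       (FunFS (@act_atom Atom) (@act_atom Atom) (@setT Atom)) /\
   ~ FSM_Mostowski_infinite (act_fun (@act_atom Atom) (act_list (@act_atom Atom)))
       (FunFS (@act_atom Atom) (act_list (@act_atom Atom)) (@Tfin Atom)) /\
   ~ FSM_Mostowski_infinite (act_fun (@act_atom Atom) (act_pow (@act_atom Atom)))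
       (FunFS (@act_atom Atom) (act_pow (@act_atom Atom)) (@Pfs Atom))).
Proof.
  pose proof (@swap_involutive_atom Atom) as Iatom.
  pose proof (atom_orbit_finite Hinf) as Oatom.
  pose proof (swap_involutive_sum _ _ Iatom Iatom) as Isum.
  pose proof (sum_orbit_finite _ _ Oatom Oatom) as Osum.
  pose proof (swap_involutive_prod _ _ Iatom Iatom) as Iprod.
  pose proof (atom_pair_orbit_finite Hinf) as Oprod.
  assert (Fsets : forall X, few_invariants (act_pow (@act_atom Atom)) X)
    by (intros; apply orbit_finite_few_invariant_sets; auto).
  repeat split.
  - apply (infinite_of_retraction Hinf (fun a => a) (fun a => a)); auto.
  - apply (infinite_of_retraction Hinf inl (fun s => match s with inl a | inr a => a end)); auto.
  - apply (infinite_of_retraction Hinf (fun a => (a, a)) fst); auto.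
  - apply orbit_finite_not_mostowski; auto.
  - apply orbit_finite_not_mostowski; auto.
  - apply orbit_finite_not_mostowski; auto.
  - apply orbit_finite_not_tarski; auto.
  - apply orbit_finite_not_tarski; auto.
  - apply orbit_finite_not_tarski; auto.
  - apply not_mostowski_of_few_invariants; [apply swap_involutive_pow|]; auto.
  - apply not_mostowski_of_few_invariants; [apply swap_involutive_pow|]; auto.
  - apply not_mostowski_of_few_invariants; [apply swap_involutive_pow|]; auto.
  - apply not_mostowski_of_few_invariants; [do 2 apply swap_involutive_pow; auto|].
    apply finite_families_few_invariants; auto.
  - apply not_mostowski_of_few_invariants; [apply swap_involutive_fun; auto|].
    apply fs_functions_few_invariants, orbit_finite_few_invariants; auto.
  - apply not_mostowski_of_few_invariants; [apply swap_involutive_fun, swap_involutive_list; auto|].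
    apply fs_functions_few_invariants, injective_tuples_few_invariants; auto.
  - apply not_mostowski_of_few_invariants; [apply swap_involutive_fun, swap_involutive_pow; auto|].
    apply fs_functions_few_invariants; auto.
Qed.
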